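(* Let $C$ be a complex scheme. If $C$ has odd type, then $$\Delta=-4\big(l+2(\Pi^--\Pi^+)+(\Lambda^--\Lambda^+)\big).$$ If $C$ has even type, then $$\Delta=-4\big(l+2(\Pi^--\Pi^+)\big).$$
   Context: A complex scheme $C$ in $\mathbb{R}P^2$ is a finite collection of disjoint smooth simple closed curves, up to isotopy, at most one of which is one-sided. The two-sided components are ovals, and $C$ carries a semi-orientation (orientations of all components up to simultaneous reversal). $C$ has odd type if it has a one-sided component $J$ and even type otherwise; in the even case an auxiliary oriented one-sided curve $J$ disjoint from the ovals is fixed. Numerical characteristics: - $l$ is the number of ovals. - Regions are the components of $\mathbb{R}P^2\setminus(C\cup J)$, and the outer region $R_1$ is the one whose closure meets $J$. The parity $\mathrm{par}$ of a region or oval is the parity of the number of ovals crossed to reach $R_1$. - For an oval $o$ bounding a disk $D_o$ and $x\in\mathrm{int}D_o$, one has $[o]=\pm2[J]$ in $H_1(\mathbb{R}P^2\setminus\{x\})$; $o$ is negative if $[o]=2[J]$, positive otherwise, and $\epsilon(o)=\pm1$ accordingly. $\Lambda^+$ and $\Lambda^-$ are the numbers of positive and negative ovals. - Two ovals form an injective pair if they bound an annulus in $\mathbb{R}P^2$. The pair is positive if their orientations are the boundary orientation induced by an orientation of that annulus, and negative otherwise. $\Pi^\pm$ is the number of positive/negative injective pairs. $\Gamma=\Gamma(C)$ is the weighted tree with vertices $R$ (weight $2\chi(R)$) for each region, $o$ (weight $0$) for each oval, and $u_1,u_2,u_3$ (weights $1,2,2$). Its edges are $Ro$ for $o\subset\partial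 R$, and $u_1u_2$, $u_1u_3$, $u_1R_1$. $A_\Gamma$ is the matrix with the weights on the diagonal and $1$ for adjacent vertices, $0$ otherwise. $\vec s$ is the vector indexed by vertices with the following entries: - $\vec s_{u_2}=1$ if $C$ has odd type and $0$ otherwise; - $\vec s_o=(-1)^{\mathrm{par}(o)+1}\epsilon(o)$ for each oval $o$; - $0$ at all other vertices. Finally $\Delta=2\vec sA_\Gamma^{-1}\vec s^{\,t}$. *)

From HB Require Import structures.
From mathcomp Require Import all_boot all_order all_algebra.
Set Implicit Arguments. Unset Strict Implicit. Unset Printing Implicit Defensive.
Import Order.TTheory GRing.Theory Num.Theory.
Local Open Scope ring_scope.

(* A complex scheme C with l ovals (indexed by 'I_l) is encoded by          *)
(*  - parent : 'I_l -> option 'I_l : the oval immediately enclosing o       *)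
(*    (o lies on the boundary of the region R_(parent o) inside that oval), *)
(*    or None if o is outermost (o lies on the boundary of R_1);            *)
(*  - pos : 'I_l -> bool : pos o = true iff o is positive (epsilon(o)=1),   *)
(*    false iff o is negative ([o] = 2[J]);                                 *)
(*  - oddt : bool : whether C has odd type.                                 *)

Section Scheme.
Variables (l : nat) (parent : 'I_l -> option 'I_l) (pos : 'I_l -> bool)
          (oddt : bool).

Definition pstep (o : option 'I_l) : option 'I_l :=
  if o is Some i then parent i else None.

(* the nesting relation is a forest (no cycles) *)
Definition scheme_acyclic : Prop :=
  forall i : 'I_l, iter l pstep (Some i) = None.

(* j is an oval enclosing i (j <> i), i.e. i lies in the disk D_j *)
Definition encloses (j i : 'I_l) : bool :=
  [exists k : 'I_l, iter k.+1 pstep (Some i) == Some j].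

(* number of ovals crossed to reach R_1 from the oval i *)
Definition depth (i : 'I_l) : nat := #|[pred j | encloses j i]|.

Definition par (i : 'I_l) : nat := (depth i %% 2)%N.

Definition eps (i : 'I_l) : rat := if pos i then 1 else -1.

Definition Lambda_plus : nat := #|[pred i | pos i]|.
Definition Lambda_minus : nat := #|[pred i | ~~ pos i]|.

(* injective pairs = nested pairs (inner, outer); positive iff the two
   ovals have opposite signs epsilon *)
Definition Pi_plus : nat :=
  #|[pred p : 'I_l * 'I_l | encloses p.2 p.1 && (pos p.1 != pos p.2)]|.
Definition Pi_minus : nat :=
  #|[pred p : 'I_l * 'I_l | encloses p.2 p.1 && (pos p.1 == pos p.2)]|.

(* number of ovals lying on the boundary of R_1, resp. of R_o (o's children) *)
Definition nroots : nat := #|[pred j | parent j == None]|.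
Definition nchildren (i : 'I_l) : nat := #|[pred j | parent j == Some i]|.

(* Euler characteristics of the regions: R_1 is the open disk RP^2 \ J
   minus nroots closed disks; R_o is the open disk int D_o minus
   nchildren o closed disks. *)
Definition chi_R1 : int := 1 - (nroots%:Z).
Definition chi_Rin (i : 'I_l) : int := 1 - (nchildren i)%:Z.

Inductive vtx := U1 | U2 | U3 | Rout | Ov of 'I_l | Rin of 'I_l.

(* numbering of the 4 + l + l vertices:
   0 = u1, 1 = u2, 2 = u3, 3 = R_1, 4+i = oval i, 4+l+i = region R_i *)
Definition nV : nat := (4 + l + l)%N.

Definition decode (v : nat) : vtx :=
  match v with
  | 0 => U1 | 1 => U2 | 2 => U3 | 3 => Rout
  | _ => match (insub (v - 4)%N : option 'I_l) with
         | Some i => Ov i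
         | None => match (insub (v - 4 - l)%N : option 'I_l) with
                   | Some i => Rin i
                   | None => Rout
                   end
         end
  end.

Definition weight (x : vtx) : rat :=
  match x with
  | U1 => 1 | U2 => 2 | U3 => 2
  | Rout => 2 * (chi_R1%:~R)
  | Ov _ => 0
  | Rin i => 2 * ((chi_Rin i)%:~R)
  end.

Definition edge (x y : vtx) : bool :=
  match x, y with
  | U1, U2 | U1, U3 | U1, Rout => true
  | Ov i, Rin j => (i == j) || (parent i == Some j)
  | Ov i, Rout => parent i == None
  | _, _ => false
  end.

Definition adj (x y : vtx) : bool := edge x y || edge y x.

Definition A_Gamma : 'M[rat]_nV :=
  \matrix_(a < nV, b < nV)
    if a == b then weight (decode a) else (adj (decode a) (decode b))%:R.

Definition svec_entry (x : vtx) : rat :=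
  match x with
  | U2 => if oddt then 1 else 0
  | Ov i => (-1) ^+ (par i).+1 * eps i
  | _ => 0
  end.

Definition s_Gamma : 'rV[rat]_nV := \row_(a < nV) svec_entry (decode a).

Definition Delta : rat := 2 * (s_Gamma *m invmx A_Gamma *m s_Gamma^T) 0 0.

End Scheme.

(* Delta = 2 x s^T where x = s A_Gamma^-1 solves x A_Gamma = s, and because
   Gamma is a tree this system can be solved in closed form.  Write
   sigma = s_(u2), d(o) for the depth of the oval o and
   rho(o) = - sigma / 2 + (sum of eps over o and the ovals enclosing o).
   The vector s is supported on u2 and the ovals, where the solution is
   x_(u2) = Lambda^+ - Lambda^- and x_o = 2 (-1)^d(o) (rho(o) + sum of eps over
   the ovals inside o); hence
     x s^T = 2 sigma (Lambda^+ - Lambda^-) - 2 l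
             - 2 sum_o eps(o) (sum of eps over the ovals nested with o),
   in which each injective pair is counted twice, with product of signs +1
   if it is negative and -1 if it is positive.  Invertibility of A_Gamma also
   comes from the tree: a kernel vector vanishes at R_1, then on the regions
   from the outside in, then on the ovals from the inside out. *)

From Pilot Require Import Defs.
From HB Require Import structures.
From mathcomp Require Import all_boot all_order all_algebra.
Import Order.TTheory GRing.Theory Num.Theory.
From mathcomp Require Import zify ring lra.
Set Implicit Arguments. Unset Strict Implicit. Unset Printing Implicit Defensive.
Local Open Scope ring_scope.

Lemma natr_orb (R : semiRingType) (a b : bool) :
  ~~ (a && b) -> ((a || b)%:R : R) = a%:R + b%:R.
Proof. by case: a; case: b; rewrite ?addr0 ?add0r. Qed.

Lemma sumr_natb (R : semiRingType) (I : finType) (P : pred I) (F : I -> R) :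
  \sum_i F i * (P i)%:R = \sum_(i | P i) F i.
Proof. by rewrite [RHS]big_mkcond; apply: eq_bigr => i _; case: (P i); rewrite ?mulr1 ?mulr0. Qed.

Lemma sumr_pred1 (R : semiRingType) (I : finType) (P : pred I) j :
  \sum_(i | P i) ((i == j)%:R : R) = (P j)%:R.
Proof.
rewrite big_mkcond (bigD1 j) //= eqxx big1 ?addr0 => [|i /negbTE ->]; last first.
  by case: (P i).
by case: (P j).
Qed.

Section Forest.
Variables (l : nat) (parent : 'I_l -> option 'I_l).
Hypothesis acyclic : scheme_acyclic parent.

Local Notation pstep := (pstep parent).
Local Notation encloses := (encloses parent).
Local Notation depth := (depth parent).

Lemma iter_pstep_None n : iter n pstep None = None.
Proof. by elim: n => //= n ->. Qed.

Lemma iter_pstep_lt n i : iter n pstep (Some i) <> None -> (n < l)%N.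
Proof.
move=> iter_n; rewrite ltnNge; apply/negP => le_l_n; apply: iter_n.
by rewrite -(subnK le_l_n) iterD acyclic iter_pstep_None.
Qed.

Lemma enclosesE j i :
  encloses j i = if parent i is Some p then (p == j) || encloses j p else false.
Proof.
rewrite /Defs.encloses; case pi: (parent i) => [p|]; last first.
  by apply/existsP => -[k]; rewrite iterSr /= pi iter_pstep_None.
apply/existsP/idP => [[[[|k] lt_k]]|].
- by rewrite /= pi => /eqP[->]; rewrite eqxx.
- rewrite iterSr /= pi => ekj; apply/orP; right; apply/existsP.
  by exists (Ordinal (ltnW lt_k)).
- have l_gt0 : (0 < l)%N by apply: leq_ltn_trans (ltn_ord i).
  case/orP => [/eqP <-|/existsP [k ekj]]; first by exists (Ordinal l_gt0); rewrite /= pi.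
  have lt_k2 : (k.+2 < l)%N.
    by apply: (@iter_pstep_lt _ i); rewrite !iterSr /= pi -iterSr (eqP ekj).
  by exists (Ordinal (ltnW lt_k2)); rewrite iterSr /= pi.
Qed.

Lemma encloses_irr i : ~~ encloses i i.
Proof.
apply/existsP => -[k /eqP cycle_k].
have iter_cycle m : iter (m * k.+1) pstep (Some i) = Some i.
  by elim: m => // m IHm; rewrite mulSn iterD IHm cycle_k.
have := @iter_pstep_lt (l * k.+1) i; rewrite iter_cycle => /(_ ltac:(by [])).
by rewrite ltnNge leq_pmulr.
Qed.

Lemma parent_neq i p : parent i = Some p -> p != i.
Proof.
by move=> pi; apply: contraNneq (encloses_irr i) => epi; rewrite enclosesE pi epi eqxx.
Qed.

Lemma depth_root i : parent i = None -> depth i = 0%N.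
Proof. by move=> pi; apply: eq_card0 => j; rewrite inE enclosesE pi. Qed.

Lemma depth_child i p : parent i = Some p -> depth i = (depth p).+1.
Proof.
move=> pi; rewrite /Defs.depth (@eq_card _ _ [predU1 p & [pred j | encloses j p]]).
  by rewrite cardU1 inE (negbTE (encloses_irr p)).
by move=> j; rewrite !inE enclosesE pi eq_sym.
Qed.

Lemma depth_lt i : (depth i < l)%N.
Proof.
rewrite -[ltnRHS]card_ord (cardD1 i) add1n ltnS.
apply: subset_leq_card; apply/subsetP => j; rewrite !inE andbT.
by apply: contraTneq => ->; apply: encloses_irr.
Qed.

Lemma forest_ind_from_roots (P : 'I_l -> Prop) :
  (forall i, (forall p, parent i = Some p -> P p) -> P i) -> forall i, P i.
Proof.
move=> IH i; move: {2}(depth i) (leqnn (depth i)) => n.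
elim: n i => [|n IHn] i le_d; apply: IH => p pi; move: le_d;
  rewrite (depth_child pi) // ltnS; exact: IHn.
Qed.

Lemma forest_ind_from_leaves (P : 'I_l -> Prop) :
  (forall i, (forall c, parent c = Some i -> P c) -> P i) -> forall i, P i.
Proof.
move=> IH i; move: {2}(l - depth i)%N (leqnn (l - depth i)%N) => n.
elim: n i => [|n IHn] i le_d; first by have := depth_lt i; lia.
apply: IH => c ci; apply: IHn; move: le_d; rewrite (depth_child ci); lia.
Qed.

Definition inside (q : option 'I_l) (j : 'I_l) : bool :=
  if q is Some o then encloses o j else true.

Lemma count_subtrees q j :
  \sum_(c | parent c == q) (((c == j) || encloses c j)%:R : rat) = (inside q j)%:R.
Proof.
elim/forest_ind_from_roots: j => j IHj; under eq_bigr do rewrite enclosesE.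
case pj: (parent j) => [p|]; last first.
  rewrite (eq_bigr (fun c => (c == j)%:R)) => [|c _]; last by rewrite orbF.
  by rewrite sumr_pred1 pj /inside; case: q {IHj} => [o|]; rewrite //= enclosesE pj.
have not_self c : ~~ ((c == j) && ((p == c) || encloses c p)).
  apply/andP => -[/eqP -> ]; apply/negP; have := encloses_irr j; by rewrite enclosesE pj.
rewrite (eq_bigr (fun c => (c == j)%:R + ((c == p) || encloses c p)%:R)); last first.
  by move=> c _; rewrite natr_orb ?not_self // (eq_sym p).
rewrite big_split /= sumr_pred1 IHj // pj /inside.
case: q {IHj} => [o|]; last by rewrite add0r.
rewrite (enclosesE o j) pj natr_orb ?(eq_sym o) //.
by apply/andP => -[/eqP ->]; rewrite (negbTE (encloses_irr o)).
Qed.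

Lemma sum_subtrees q (f : 'I_l -> rat) :
  \sum_(c | parent c == q) (f c + \sum_(j | encloses c j) f j) = \sum_(j | inside q j) f j.
Proof.
transitivity (\sum_(c | parent c == q) \sum_j f j * ((c == j) || encloses c j)%:R).
  apply: eq_bigr => c _; rewrite sumr_natb [RHS](bigD1 c) ?eqxx //=; congr (_ + _).
  apply: eq_bigl => j; rewrite eq_sym; case: eqP => [->|_] /=.
    by rewrite (negbTE (encloses_irr c)).
  by rewrite andbT.
rewrite exchange_big -(sumr_natb (inside q)); apply: eq_bigr => j _.
by rewrite -mulr_sumr count_subtrees.
Qed.

End Forest.

Arguments U1 {l}. Arguments U2 {l}. Arguments U3 {l}. Arguments Rout {l}.

Section Vertices.
Variable l : nat.

(* Equality on vertices is transported from [nat * nat] rather than from the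
   numbering [enc], so that distinct constructors are told apart by computation. *)
Definition vtx_code (v : vtx l) : nat * nat :=
  match v with
  | U1 => (0, 0) | U2 => (1, 0) | U3 => (2, 0) | Rout => (3, 0)
  | Ov i => (4, val i) | Rin i => (5, val i)
  end%N.

Definition vtx_uncode (c : nat * nat) : option (vtx l) :=
  match c with
  | (0, _) => Some U1 | (1, _) => Some U2 | (2, _) => Some U3 | (3, _) => Some Rout
  | (4, i) => omap (@Ov l) (insub i) | (5, i) => omap (@Rin l) (insub i)
  | _ => None
  end%N.

Lemma vtx_codeK : pcancel vtx_code vtx_uncode.
Proof. by case=> //= i; rewrite valK. Qed.

HB.instance Definition _ := Equality.copy (vtx l) (pcan_type vtx_codeK).

Definition enc_nat (v : vtx l) : nat :=
  match v with
  | U1 => 0 | U2 => 1 | U3 => 2 | Rout => 3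
  | Ov i => 4 + i | Rin i => 4 + l + i
  end.

Lemma enc_nat_lt v : (enc_nat v < nV l)%N.
Proof. by rewrite /nV; case: v => //= i; have := ltn_ord i; lia. Qed.

Definition enc v : 'I_(nV l) := Ordinal (enc_nat_lt v).

Lemma encK : cancel enc (decode l).
Proof.
case=> //= i; rewrite /decode.
- rewrite addKn; case: insubP => [k _ ki|]; last by rewrite ltn_ord.
  by congr Ov; apply: val_inj.
- rewrite -addnA addKn; case: insubP => [k lt_k _|_]; first by move: lt_k; lia.
  rewrite addKn; case: insubP => [k _ ki|]; last by rewrite ltn_ord.
  by congr Rin; apply: val_inj.
Qed.

Lemma decodeK (a : 'I_(nV l)) : enc (decode l a) = a.
Proof.
case: a => a lt_a; apply: val_inj.
do 4 (case: a lt_a => [|a] lt_a; first reflexivity).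
rewrite /decode; have -> : (a.+4 - 4 = a)%N by lia.
case: insubP => [k _ ka|] /=; first by rewrite ka.
rewrite -ltnNge => le_l_a; have lt_al : (a - l < l)%N by move: lt_a; rewrite /nV; lia.
by case: insubP => [k _ ka|] /=; [rewrite ka; lia | rewrite lt_al].
Qed.

Lemma sum_vtx (F : 'I_(nV l) -> rat) :
  \sum_a F a = F (enc U1) + F (enc U2) + F (enc U3) + F (enc Rout)
     + \sum_(i < l) F (enc (Ov i)) + \sum_(i < l) F (enc (Rin i)).
Proof.
rewrite 4!big_ord_recl big_split_ord /= !addrA.
by congr (_ + _ + _ + _ + _ + _); try apply: eq_bigr => i _; congr F; apply: val_inj.
Qed.

Lemma eq_Rin (i j : 'I_l) : (Rin i == Rin j) = (i == j).
Proof. by []. Qed.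

End Vertices.

Section Adjacency.
Variables (l : nat) (parent : 'I_l -> option 'I_l).
Hypothesis acyclic : scheme_acyclic parent.
Variable v : 'rV[rat]_(nV l).

Local Notation A := (A_Gamma parent).
Local Notation x u := (v 0 (enc u)).

Lemma A_Gamma_enc u w :
  A (enc u) (enc w) = if u == w then weight parent u else (adj parent u w)%:R.
Proof. by rewrite mxE (inj_eq (can_inj (@encK l))) !encK. Qed.

Lemma mulmx_A_U1 : (v *m A) 0 (enc U1) = x U1 + x U2 + x U3 + x Rout.
Proof.
rewrite mxE sum_vtx !big1 => [|i _|i _]; rewrite ?A_Gamma_enc /= ?mulr0 //.
by rewrite !mulr1 !addr0.
Qed.

Lemma mulmx_A_U2 : (v *m A) 0 (enc U2) = x U1 + 2 * x U2.
Proof.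
rewrite mxE sum_vtx !big1 => [|i _|i _]; rewrite ?A_Gamma_enc /= ?mulr0 //.
by rewrite mulr1 !addr0 mulrC.
Qed.

Lemma mulmx_A_U3 : (v *m A) 0 (enc U3) = x U1 + 2 * x U3.
Proof.
rewrite mxE sum_vtx !big1 => [|i _|i _]; rewrite ?A_Gamma_enc /= ?mulr0 //.
by rewrite mulr1 !addr0 mulrC.
Qed.

Lemma mulmx_A_Rout : (v *m A) 0 (enc Rout) =
  x U1 + weight parent Rout * x Rout + \sum_(i | parent i == None) x (Ov i).
Proof.
rewrite mxE sum_vtx [X in _ + X]big1 => [|i _]; rewrite ?A_Gamma_enc /= ?mulr0 //.
rewrite mulr1 !addr0 mulrC; congr (_ + _).
rewrite -(sumr_natb (fun i => parent i == None)); apply: eq_bigr => i _.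
by rewrite A_Gamma_enc /adj /= orbF.
Qed.

Lemma mulmx_A_Ov o : (v *m A) 0 (enc (Ov o)) =
  x (Rin o) + (if parent o is Some p then x (Rin p) else x Rout).
Proof.
rewrite mxE sum_vtx [X in _ + X + _]big1 => [|i _]; last first.
  by rewrite A_Gamma_enc /adj /=; case: ifP; rewrite mulr0.
rewrite !A_Gamma_enc /adj /= !mulr0 !add0r addr0.
under eq_bigr do rewrite A_Gamma_enc /adj /=.
rewrite sumr_natb.
case po: (parent o) => [p|] /=.
  rewrite mulr0 add0r (bigD1 o) ?eqxx //=; congr (_ + _).
  apply: big_pred1 => i /=; rewrite (eq_sym o).
  case: eqP => [->|_] /=; first by rewrite eq_sym (negbTE (parent_neq acyclic po)).
  by rewrite andbT; apply/eqP/eqP => [[]|->].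
by rewrite mulr1 addrC; congr (_ + _); apply: big_pred1 => i; rewrite /= orbF eq_sym.
Qed.

Lemma mulmx_A_Rin o : (v *m A) 0 (enc (Rin o)) =
  weight parent (Rin o) * x (Rin o) + x (Ov o) + \sum_(i | parent i == Some o) x (Ov i).
Proof.
have diag :
    \sum_i x (Rin i) * A (enc (Rin i)) (enc (Rin o)) = weight parent (Rin o) * x (Rin o).
  rewrite (bigD1 o) //= A_Gamma_enc eqxx mulrC big1 ?addr0 // => i ne_io.
  by rewrite A_Gamma_enc eq_Rin (negbTE ne_io) /adj /= mulr0.
rewrite mxE sum_vtx diag !A_Gamma_enc /adj /= !mulr0 !add0r addrC -addrA; congr (_ + _).
have -> : x (Ov o) = \sum_(i | i == o) x (Ov i) by rewrite big_pred1_eq.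
rewrite -[\sum_(i | i == o) _]sumr_natb -[\sum_(i | parent i == Some o) _]sumr_natb.
rewrite -big_split /=.
apply: eq_bigr => i _; rewrite A_Gamma_enc /adj /= orbF -mulrDr natr_orb //.
by apply/andP => -[/eqP -> /eqP/(parent_neq acyclic)]; rewrite eqxx.
Qed.

End Adjacency.

Section Invertibility.
Variables (l : nat) (parent : 'I_l -> option 'I_l).
Hypothesis acyclic : scheme_acyclic parent.

Local Notation A := (A_Gamma parent).

Lemma A_Gamma_ker0 (v : 'rV[rat]_(nV l)) : v *m A = 0 -> v = 0.
Proof.
move=> vA0; have col0 u : (v *m A) 0 (enc u) = 0 by rewrite vA0 mxE.
have e1 := col0 U1; have e2 := col0 U2; have e3 := col0 U3.
rewrite mulmx_A_U1 in e1; rewrite mulmx_A_U2 in e2; rewrite mulmx_A_U3 in e3.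
have xRout : v 0 (enc Rout) = 0 by lra.
have xRin : forall o, v 0 (enc (Rin o)) = 0.
  elim/(forest_ind_from_roots acyclic) => o IHo; have := col0 (Ov o).
  rewrite (mulmx_A_Ov acyclic); case po: (parent o) => [p|].
    by rewrite (IHo p) // addr0.
  by rewrite xRout addr0.
have xOv : forall o, v 0 (enc (Ov o)) = 0.
  elim/(forest_ind_from_leaves acyclic) => o IHo; have := col0 (Rin o).
  by rewrite (mulmx_A_Rin acyclic) xRin mulr0 add0r big1 ?addr0 // => c /eqP /IHo.
have e4 := col0 Rout; rewrite mulmx_A_Rout xRout mulr0 addr0 big1 ?addr0 in e4; last first.
  by move=> i _; apply: xOv.
apply/rowP => a; rewrite mxE -(decodeK a).
by case: (decode l a) => [| | | |o|o]; rewrite ?xOv ?xRin //; lra.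
Qed.

Lemma unitmx_A_Gamma : A \in unitmx.
Proof.
rewrite -row_free_unit -kermx_eq0; apply/eqP/row_matrixP => i.
by rewrite row0; apply: A_Gamma_ker0; rewrite -row_mul mulmx_ker row0.
Qed.

End Invertibility.

Section Solution.
Variables (l : nat) (parent : 'I_l -> option 'I_l) (pos : 'I_l -> bool) (oddt : bool).
Hypothesis acyclic : scheme_acyclic parent.

Local Notation encloses := (encloses parent).
Local Notation eps := (eps pos).
Local Notation s := (s_Gamma parent pos oddt).

Definition sigma : rat := if oddt then 1 else 0.
Definition eps_sum : rat := \sum_i eps i.
Definition ancestors_sum i : rat := \sum_(j | encloses j i) eps j.
Definition descendants_sum i : rat := \sum_(j | encloses i j) eps j.
Definition sgn i : rat := (-1) ^+ depth parent i.
Definition rho i : rat := - sigma / 2 + eps i + ancestors_sum i.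

Definition solution_entry (u : vtx l) : rat :=
  match u with
  | U1 => sigma - 2 * eps_sum
  | U2 => eps_sum
  | U3 => eps_sum - sigma / 2
  | Rout => - sigma / 2
  | Ov i => 2 * sgn i * (rho i + descendants_sum i)
  | Rin i => - sgn i * rho i
  end.

Definition solution : 'rV[rat]_(nV l) := \row_a solution_entry (decode l a).

Lemma solution_enc u : solution 0 (enc u) = solution_entry u.
Proof. by rewrite mxE encK. Qed.

Lemma s_Gamma_enc u : s 0 (enc u) = svec_entry parent pos oddt u.
Proof. by rewrite mxE encK. Qed.

Lemma svec_entry_Ov i : svec_entry parent pos oddt (Ov i) = - sgn i * eps i.
Proof. by rewrite /= /par modn2 exprS signr_odd mulN1r mulNr. Qed.

Lemma sgn_root i : parent i = None -> sgn i = 1.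
Proof. by move=> pi; rewrite /sgn (depth_root acyclic pi). Qed.

Lemma sgn_child i p : parent i = Some p -> sgn i = - sgn p.
Proof. by move=> pi; rewrite /sgn (depth_child acyclic pi) exprS mulN1r. Qed.

Lemma rho_root i : parent i = None -> rho i = - sigma / 2 + eps i.
Proof.
move=> pi; rewrite /rho /ancestors_sum big_pred0 ?addr0 // => j.
by rewrite (enclosesE acyclic) pi.
Qed.

Lemma rho_child i p : parent i = Some p -> rho i = rho p + eps i.
Proof.
move=> pi; rewrite /rho /ancestors_sum (bigD1 p) /=; last first.
  by rewrite (enclosesE acyclic) pi eqxx.
rewrite (eq_bigl (encloses^~ p)); first by ring.
move=> j /=; rewrite (enclosesE acyclic) pi (eq_sym p).
by case: eqP => [->|_]; rewrite ?eqxx ?andbT ?(negbTE (encloses_irr acyclic p)).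
Qed.

Lemma solution_mulmx : solution *m A_Gamma parent = s.
Proof.
apply/rowP => b; rewrite -(decodeK b) s_Gamma_enc.
case: (decode l b) => [| | | |o|o].
- by rewrite mulmx_A_U1 !solution_enc /=; field.
- by rewrite mulmx_A_U2 !solution_enc /= subrK.
- by rewrite mulmx_A_U3 !solution_enc /=; field.
- have roots : \sum_(i | parent i == None) solution 0 (enc (Ov i)) =
      \sum_(i | parent i == None) (- sigma) + 2 * eps_sum.
    rewrite /eps_sum -(sum_subtrees acyclic None) mulr_sumr -big_split /=.
    apply: eq_bigr => i /eqP pi.
    by rewrite solution_enc /= (sgn_root pi) (rho_root pi) /descendants_sum; field.
  rewrite mulmx_A_Rout !solution_enc roots sumr_const /= /chi_R1 intrB /nroots.
  by field.
- rewrite (mulmx_A_Ov acyclic) !solution_enc svec_entry_Ov /=.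
  case pi: (parent o) => [p|]; rewrite ?solution_enc /=.
    by rewrite (sgn_child pi) (rho_child pi); field.
  by rewrite (sgn_root pi) (rho_root pi); field.
- have children : \sum_(i | parent i == Some o) solution 0 (enc (Ov i)) =
      \sum_(i | parent i == Some o) (- 2 * sgn o * rho o) - 2 * sgn o * descendants_sum o.
    rewrite /descendants_sum -(sum_subtrees acyclic (Some o)) mulr_sumr -sumrB.
    apply: eq_bigr => i /eqP pi.
    by rewrite solution_enc /= (sgn_child pi) (rho_child pi) /descendants_sum; field.
  rewrite (mulmx_A_Rin acyclic) !solution_enc children sumr_const /= /chi_Rin intrB.
  by rewrite /nchildren; field.
Qed.

Lemma eps_sqr i : eps i * eps i = 1.
Proof. by rewrite /Defs.eps; case: (pos i); rewrite ?mulr1 ?mulrNN. Qed.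

Lemma sgn_sqr i : sgn i * sgn i = 1.
Proof. by rewrite /sgn -exprD -signr_odd oddD addbb. Qed.

Lemma eps_sumE : eps_sum = (Lambda_plus pos)%:R - (Lambda_minus pos)%:R.
Proof.
rewrite /eps_sum (bigID pos) /=.
rewrite [\sum_(i | pos i) _](eq_bigr (fun=> 1)) => [|i pi]; last by rewrite /Defs.eps pi.
rewrite [\sum_(i | ~~ pos i) _](eq_bigr (fun=> -1)) => [|i ni]; last first.
  by rewrite /Defs.eps (negbTE ni).
by rewrite !sumr_const mulNrn.
Qed.

Lemma sum_eps_ancestors :
  \sum_i eps i * ancestors_sum i = (Pi_minus parent pos)%:R - (Pi_plus parent pos)%:R.
Proof.
under eq_bigr do rewrite /ancestors_sum mulr_sumr.
rewrite pair_big_dep (bigID (fun p => pos p.1 == pos p.2)) /=.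
rewrite [\sum_(p | _ && (_ == _)) _](eq_bigr (fun=> 1)) => [|p /andP[_ /eqP same]]; last first.
  by rewrite /Defs.eps same; case: (pos p.2); rewrite ?mulr1 ?mulrNN.
rewrite [\sum_(p | _ && (_ != _)) _](eq_bigr (fun=> -1)) => [|p /andP[_]]; last first.
  by rewrite /Defs.eps; case: (pos p.1); case: (pos p.2); rewrite ?mulr1 ?mulN1r.
by rewrite !sumr_const mulNrn.
Qed.

Lemma sum_eps_descendants :
  \sum_i eps i * descendants_sum i = \sum_i eps i * ancestors_sum i.
Proof.
under eq_bigr do rewrite /descendants_sum mulr_sumr.
rewrite (exchange_big_dep xpredT) //=; apply: eq_bigr => i _.
by rewrite /ancestors_sum mulr_sumr; apply: eq_bigr => j _; rewrite mulrC.
Qed.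

Lemma DeltaE : Delta parent pos oddt =
  4 * sigma * eps_sum - 4 * l%:R - 8 * \sum_i eps i * ancestors_sum i.
Proof.
have sA : s *m invmx (A_Gamma parent) = solution.
  by rewrite -solution_mulmx mulmxK // unitmx_A_Gamma.
have entry u : solution 0 (enc u) * s^T (enc u) 0 =
    solution_entry u * svec_entry parent pos oddt u.
  by rewrite !mxE !encK.
have oval i : solution_entry (Ov i) * svec_entry parent pos oddt (Ov i) =
    sigma * eps i - 2 - 2 * (eps i * ancestors_sum i) - 2 * (eps i * descendants_sum i).
  rewrite svec_entry_Ov /= /rho; transitivity (- 2 * (sgn i * sgn i) *
    (eps i * (- sigma / 2) + eps i * eps i + eps i * ancestors_sum i
     + eps i * descendants_sum i)); first by field.
  by rewrite sgn_sqr eps_sqr; field.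
rewrite /Delta sA mxE sum_vtx !entry [X in _ + X]big1 => [|i _]; last first.
  by rewrite entry /= mulr0.
under eq_bigr do rewrite entry oval.
rewrite !sumrB -mulr_sumr -!mulr_sumr sum_eps_descendants sumr_const card_ord /=.
by rewrite -mulr_natr /eps_sum /sigma; case: oddt; field.
Qed.

End Solution.

Theorem proposition1p5 (l : nat) (parent : 'I_l -> option 'I_l)
    (pos : 'I_l -> bool) (oddt : bool) :
  scheme_acyclic parent ->
  (oddt ->
     Delta parent pos oddt =
     - 4 * ((l%:R : rat) + 2 * ((Pi_minus parent pos)%:R - (Pi_plus parent pos)%:R)
            + ((Lambda_minus pos)%:R - (Lambda_plus pos)%:R))) /\
  (~~ oddt ->
     Delta parent pos oddt =
     - 4 * ((l%:R : rat) + 2 * ((Pi_minus parent pos)%:R - (Pi_plus parent pos)%:R))).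
Proof.
move=> acyclic; rewrite (DeltaE pos oddt acyclic) sum_eps_ancestors eps_sumE /sigma.
by split=> [->|/negbTE ->]; ring.
Qed.
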